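(* Let $a,b\ge 1$ be coprime integers with $a\le b$. Then there is a homogeneous polynomial $P_{a/b}(u,v,w)$ of degree $a+b-1$ with non-negative integer coefficients, not divisible by $u$, by $v$ or by $w$, such that $$M_{a/b}(x,y,z)=\frac{P_{a/b}(x^2,y^2,z^2)}{x^{a-1}\,y^{b-1}\,z^{a+b-1}}.$$
   Context: Markov polynomials. Let $x,y,z$ be indeterminates. Consider the set consisting of all rationals $\rho\in[0,1]$, each written in lowest terms $\rho=a/b$ with integers $a\ge 0$, $b\ge 1$, together with the formal symbol $1/0$ (i.e. $(a,b)=(1,0)$). To each such $\rho$ attach a Laurent polynomial $M_\rho(x,y,z)\in\mathbb{Z}[x^{\pm1},y^{\pm1},z^{\pm1}]$, the Markov polynomial, defined recursively by $M_{1/0}=y$, $M_{0/1}=x$, $M_{1/1}=\frac{x^2+y^2}{z}$, and: whenever $a/b$ and $c/d$ are elements of this set (non-negative integer pairs in lowest terms) with $|ad-bc|=1$ and $(a+2c)/(b+2d)\in[0,1]$, then $$M_{\frac{a+2c}{b+2d}}=\frac{M_{c/d}^2+M_{\frac{a+c}{b+d}}^2}{M_{a/b}}.$$ This determines $M_\rho$ uniquely for every rational $\rho\in[0,1]$. (For example $M_{1/2}=\frac{(x^2+y^2)^2+x^2z^2}{yz^2}$.) The triples $(M_{a/b},M_{c/d},M_{(a+c)/(b+d)})$ with $|ad-bc|=1$ solve $X^2+Y^2+Z^2=\frac{x^2+y^2+z^2}{xyz}XYZ$. *)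

From HB Require Import structures.
From mathcomp Require Import all_boot all_order all_algebra.
From mathcomp Require Import fraction.
From mathcomp Require Export mpoly.
Set Implicit Arguments. Unset Strict Implicit. Unset Printing Implicit Defensive.
Import Order.TTheory GRing.Theory Num.Theory.
Local Open Scope ring_scope.

(* Integer polynomials in three variables u,v,w (= 'X_0,'X_1,'X_2), and
   the field Q(x,y,z) of rational functions, realised as the fraction field
   of Z[x,y,z]; Laurent polynomials live inside it. *)
Notation poly3 := {mpoly int[3]}.
Notation ratfun3 := {fraction poly3}.

Definition vx : ratfun3 := tofrac ('X_0 : poly3).
Definition vy : ratfun3 := tofrac ('X_1 : poly3).
Definition vz : ratfun3 := tofrac ('X_2 : poly3).

(* The index set: pairs (a,b) of naturals in lowest terms with a/b in [0,1],
   together with the formal symbol 1/0, i.e. the pair (1,0). *)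
Definition markov_index (a b : nat) : bool :=
  coprime a b && ((a <= b)%N || ((a == 1%N) && (b == 0%N))).

Definition farey_adj (a b c d : nat) : bool :=
  (a * d == b * c + 1)%N || (b * c == a * d + 1)%N.

(* M : nat -> nat -> ratfun3, M a b standing for M_{a/b}, is a family of
   Markov polynomials: it satisfies the defining initial values and the
   defining recursion of the paper.  (These conditions determine M_{a/b}
   uniquely for every index a/b.) *)
Definition is_markov_family (M : nat -> nat -> ratfun3) : Prop :=
  [/\ M 1%N 0%N = vy,
      M 0%N 1%N = vx,
      M 1%N 1%N = (vx ^+ 2 + vy ^+ 2) / vz &
      forall a b c d : nat,
        markov_index a b -> markov_index c d -> farey_adj a b c d ->
        (a + 2 * c <= b + 2 * d)%N ->
        M (a + 2 * c)%N (b + 2 * d)%N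
          = (M c d ^+ 2 + M (a + c)%N (b + d)%N ^+ 2) / M a b].

From HB Require Import structures.
From mathcomp Require Import all_boot all_order all_algebra.
From mathcomp Require Import fraction mpoly ring zify.
Set Implicit Arguments. Unset Strict Implicit. Unset Printing Implicit Defensive.
Import Order.TTheory GRing.Theory Num.Theory.
Local Open Scope ring_scope.

(* Following Cohn, attach to each pair of Farey neighbours e/f < g/h of the
   Stern-Brocot tree two 2x2 matrices A, B over Z[u,v,w] with nonnegative
   coefficients, det A = u^e v^f w^(e+f) and tr A = (u+v+w) A_21, such that
   M_{e/f}, M_{g/h} and M_{(e+g)/(f+h)} are the lower-left entries of A, B and
   AB evaluated at (x^2,y^2,z^2) and shifted by a Laurent monomial.  By
   Cayley-Hamilton, the Stern-Brocot moves (A, B) -> (A, AB) and (AB, B)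
   preserve these invariants, and the new lower-left entry is the other root
   of a quadratic Markov-type relation (Vieta jumping), which is exactly the
   recursion defining M.  Homogeneity and positivity of P_{a/b} hold for
   entries of products; at (u,v,w) = (1,0,0) and (0,1,0) every Cohn matrix
   specialises to a fixed idempotent with lower-left entry 1, so P_{a/b} is
   divisible by none of u, v, w. *)

Section Farey.
Local Open Scope nat_scope.

Lemma farey_coprime e f g h : g * f = e * h + 1 -> coprime e f /\ coprime g h.
Proof.
move=> farey; split; rewrite /coprime -dvdn1.
- have : gcdn e f %| g * f by rewrite dvdn_mull ?dvdn_gcdr.
  by rewrite farey dvdn_addr // dvdn_mulr ?dvdn_gcdl.
- have : gcdn g h %| g * f by rewrite dvdn_mulr ?dvdn_gcdl.
  by rewrite farey dvdn_addr // dvdn_mull ?dvdn_gcdr.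
Qed.

Lemma farey_markov_index e f g h : g * f = e * h + 1 -> e + g <= f + h ->
  markov_index e f && markov_index g h.
Proof.
move=> farey le_med; have [cef cgh] := farey_coprime farey.
rewrite /markov_index cef cgh /= {cef cgh}.
have le_ef : e <= f.
  case: (leqP e f) => // lt_fe; have le_gh : g <= h by lia.
  have : g * f <= h * f by rewrite leq_mul2r le_gh orbT.
  have : f * h <= e * h by rewrite leq_mul2r ltnW ?orbT.
  lia.
rewrite le_ef /=; case: (leqP g h) => //= lt_hg.
have : h.+1 * f <= g * f by rewrite leq_mul2r lt_hg orbT.
have : e * h <= f * h by rewrite leq_mul2r le_ef orbT.
move=> le_eh le_hf; have le_f1 : f <= 1 by lia.
case: f le_f1 farey le_ef le_med {le_eh le_hf} => [|[|//]] _ farey le_ef le_med; first lia.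
have e0 : e = 0 by lia.
by rewrite e0 in farey; apply/andP; split; apply/eqP; lia.
Qed.

Lemma farey_gt0 e f g h : g * f = e * h + 1 -> 0 < e + f /\ 0 < g + h.
Proof.
move=> farey; split; rewrite lt0n addn_eq0; apply/negP => /andP[/eqP x0 /eqP y0];
  by move: farey; rewrite x0 y0 ?muln0 ?mul0n.
Qed.

(* The root (0/1, 1/0) of the Stern-Brocot tree, or a mediant step from the
   parent pair. *)
Lemma farey_descent e f g h : g * f = e * h + 1 ->
  [\/ [/\ e = 0, f = 1, g = 1 & h = 0], e <= g /\ f <= h | g <= e /\ h <= f].
Proof.
move=> farey.
case: (leqP e g) => le_eg; case: (leqP f h) => le_fh.
- by constructor 2.
- have le_e1 : e <= 1 by nia.
  case: e le_e1 farey le_eg => [|[|//]] _ farey le_eg.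
    move: farey; rewrite mul0n add0n => /eqP; rewrite muln_eq1 => /andP[/eqP g1 /eqP f1].
    by constructor 1; split => //; lia.
  by constructor 3; nia.
- by exfalso; nia.
- by constructor 3; split; apply: ltnW.
Qed.

Lemma coprime_mediant a b : 0 < a -> 0 < b -> coprime a b ->
  exists e f g h, [/\ a = e + g, b = f + h & g * f = e * h + 1].
Proof.
have [n le_n] := ubnP (a + b); elim: n => // n IH in a b le_n *.
move=> a_gt0 b_gt0 cab; case: (ltngtP a b) => [lt_ab | lt_ba | eq_ab].
- have cab' : coprime a (b - a) by rewrite /coprime -gcdnDl subnKC // ltnW.
  have [e [f [g [h [Ea Eb farey]]]]] := IH a (b - a) ltac:(lia) a_gt0 ltac:(lia) cab'.
  exists e, (e + f), g, (g + h); split => //; first lia.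
  by rewrite !mulnDr farey (mulnC g e) addnA.
- have cab' : coprime (a - b) b.
    by rewrite coprime_sym /coprime -gcdnDl subnKC ?(ltnW lt_ba) // gcdnC.
  have [e [f [g [h [Ea Eb farey]]]]] := IH (a - b) b ltac:(lia) ltac:(lia) b_gt0 cab'.
  exists (e + f), f, (g + h), h; split => //; first lia.
  by rewrite !mulnDl farey (mulnC f h) addnAC.
- move: cab; rewrite -eq_ab /coprime gcdnn => /eqP ->.
  by exists 0, 1, 1, 0.
Qed.

End Farey.

Lemma sum_ord2 (V : nmodType) (F : 'I_2 -> V) : \sum_i F i = F 0 + F 1.
Proof. by rewrite !big_ord_recl big_ord0 addr0; congr (_ + F _); apply: val_inj. Qed.

Lemma mulmx22E (R : ringType) (A B : 'M[R]_2) i j :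
  (A *m B) i j = A i 0 * B 0 j + A i 1 * B 1 j.
Proof. by rewrite mxE sum_ord2. Qed.

Definition mx22 (T : Type) (a b c d : T) : 'M[T]_2 :=
  \matrix_(i, j) if i == 0 then if j == 0 then a else b else if j == 0 then c else d.

Lemma ord2P (i : 'I_2) : i = 0 \/ i = 1.
Proof. by case: i => [[|[|//]] ?]; [left | right]; apply: val_inj. Qed.

Lemma map_mx22 (T S : Type) (f : T -> S) a b c d :
  map_mx f (mx22 a b c d) = mx22 (f a) (f b) (f c) (f d).
Proof.
by apply/matrixP => i j; rewrite !mxE; case: (ord2P i) => ->; case: (ord2P j) => ->.
Qed.

Section Mx22.
Variable R : comRingType.
Implicit Types A B : 'M[R]_2.

Lemma mxtrace22 A : \tr A = A 0 0 + A 1 1.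
Proof. exact: sum_ord2. Qed.

Lemma det_mx22 A : \det A = A 0 0 * A 1 1 - A 0 1 * A 1 0.
Proof.
rewrite (expand_det_row _ 0) !big_ord_recl big_ord0 /cofactor !det_mx11 !mxE /=.
have -> : lift (lift 0 0) (0 : 'I_1) = 0 :> 'I_2 by apply: val_inj.
have -> : lift 0 (0 : 'I_1) = 1 :> 'I_2 by apply: val_inj.
by rewrite /= expr0 expr1 addr0 !mul1r mulN1r mulrN.
Qed.

Lemma Cayley_Hamilton22 A : A *m A = \tr A *: A - (\det A)%:M.
Proof.
apply/matrixP => i j; rewrite mulmx22E mxtrace22 det_mx22 !mxE.
by case: (ord2P i) => ->; case: (ord2P j) => ->; rewrite /=; ring.
Qed.

Lemma mulmx_sqr_l A B : A *m (A *m B) = \tr A *: (A *m B) - \det A *: B.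
Proof. by rewrite mulmxA Cayley_Hamilton22 mulmxBl -scalemxAl mul_scalar_mx. Qed.

Lemma mulmx_sqr_r A B : (A *m B) *m B = \tr B *: (A *m B) - \det B *: A.
Proof. by rewrite -mulmxA Cayley_Hamilton22 mulmxBr -scalemxAr mul_mx_scalar. Qed.

End Mx22.

Lemma eq_of_subr_multiple (R : comRingType) (c l r x y : R) :
  l = r -> x - y = c * (l - r) -> x = y.
Proof. by move=> -> /eqP; rewrite subrr mulr0 subr_eq0 => /eqP. Qed.

Section CohnMatrices.
Variables (R : comRingType) (t : R).
Implicit Types A B : 'M[R]_2.

Definition cohn_trace A := \tr A = t * A 1 0.

(* At t = 3 and det A = det B = 1 this is the Markov equation for the
   lower-left entries of A, B and AB. *)
Definition cohn_markov A B :=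
  (A *m B) 1 0 ^+ 2 + \det B * A 1 0 ^+ 2 + \det A * B 1 0 ^+ 2
  = t * A 1 0 * B 1 0 * (A *m B) 1 0.

Lemma cohn_trace_mul_l A B : cohn_trace B -> cohn_trace (A *m B) ->
  cohn_trace (A *m (A *m B)).
Proof.
rewrite /cohn_trace mulmx_sqr_l raddfB /= !mxtraceZ !mxE => -> ->; ring.
Qed.

Lemma cohn_trace_mul_r A B : cohn_trace A -> cohn_trace (A *m B) ->
  cohn_trace ((A *m B) *m B).
Proof.
rewrite /cohn_trace mulmx_sqr_r raddfB /= !mxtraceZ !mxE => -> ->; ring.
Qed.

(* By Cayley-Hamilton, (A (AB))_21 = t A_21 (AB)_21 - det A B_21 is the other
   root of cohn_markov A B seen as a quadratic in B_21; the multipliers below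
   certify the resulting identities. *)
Lemma cohn_exchange_l A B : cohn_trace A -> cohn_markov A B ->
  (A *m (A *m B)) 1 0 * B 1 0 = \det B * A 1 0 ^+ 2 + (A *m B) 1 0 ^+ 2.
Proof.
rewrite /cohn_trace /cohn_markov mulmx_sqr_l; move: (A *m B) => C.
rewrite !mxE => -> mkAC.
by apply: (eq_of_subr_multiple (c := -1) mkAC); ring.
Qed.

Lemma cohn_exchange_r A B : cohn_trace B -> cohn_markov A B ->
  ((A *m B) *m B) 1 0 * A 1 0 = \det A * B 1 0 ^+ 2 + (A *m B) 1 0 ^+ 2.
Proof.
rewrite /cohn_trace /cohn_markov mulmx_sqr_r; move: (A *m B) => C.
rewrite !mxE => -> mkAC.
by apply: (eq_of_subr_multiple (c := -1) mkAC); ring.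
Qed.

Lemma cohn_markov_mul_l A B : cohn_trace A -> cohn_markov A B ->
  cohn_markov A (A *m B).
Proof.
rewrite /cohn_trace /cohn_markov mulmx_sqr_l det_mulmx; move: (A *m B) => C.
rewrite !mxE => -> mkAC.
by apply: (eq_of_subr_multiple (c := \det A) mkAC); ring.
Qed.

Lemma cohn_markov_mul_r A B : cohn_trace B -> cohn_markov A B ->
  cohn_markov (A *m B) B.
Proof.
rewrite /cohn_trace /cohn_markov mulmx_sqr_r det_mulmx; move: (A *m B) => C.
rewrite !mxE => -> mkAC.
by apply: (eq_of_subr_multiple (c := \det B) mkAC); ring.
Qed.

End CohnMatrices.

Lemma frac_exchange (F : fieldType) (pn pa pc pm da dc w : F) :
  pa != 0 -> da != 0 -> dc != 0 -> w != 0 ->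
  pn * pa = da ^+ 2 * pc ^+ 2 + pm ^+ 2 ->
  pn * w / (da * dc ^+ 2)
  = ((pc * w / dc) ^+ 2 + (pm * w / (da * dc)) ^+ 2) / (pa * w / da).
Proof.
move=> pa0 da0 dc0 w0 exch.
have -> : pn = (da ^+ 2 * pc ^+ 2 + pm ^+ 2) / pa by rewrite -exch mulfK.
by field; rewrite pa0 da0 dc0 w0.
Qed.

Lemma mul_xyz_divS (F : fieldType) (p x y z : F) a b :
  x != 0 -> y != 0 -> z != 0 ->
  p * (x * y * z) / (x ^+ a.+1 * y ^+ b.+1 * z ^+ (a.+1 + b.+1))
  = p / (x ^+ a * y ^+ b * z ^+ (a + b).+1).
Proof.
move=> x0 y0 z0; rewrite addSn addnS !exprS.
by field; rewrite ?expf_neq0 ?x0 ?y0 ?z0.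
Qed.

Lemma markov_base_identities (F : fieldType) (x y z : F) :
  x != 0 -> y != 0 -> z != 0 ->
  [/\ 1 * (x * y * z) / (x ^+ 0 * y ^+ 1 * z ^+ (0 + 1)) = x,
      1 * (x * y * z) / (x ^+ 1 * y ^+ 0 * z ^+ (1 + 0)) = y
    & (x ^+ 2 + y ^+ 2) * (x * y * z) / (x ^+ 1 * y ^+ 1 * z ^+ (1 + 1))
      = (x ^+ 2 + y ^+ 2) / z].
Proof. by move=> x0 y0 z0; split; field; rewrite ?x0 ?y0 ?z0. Qed.

Section NonnegCoeffs.
Variables (n : nat) (R : numDomainType).

Definition nneg_coeffs : {pred {mpoly R[n]}} :=
  fun p => all (fun m => 0 <= p@_m) (msupp p).

Lemma nneg_coeffsP (p : {mpoly R[n]}) :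
  reflect (forall m, 0 <= p@_m) (p \in nneg_coeffs).
Proof.
apply: (iffP allP) => [p_ge0 m | p_ge0 m _]; last exact: p_ge0.
by have [/p_ge0 | /memN_msupp_eq0 ->] := boolP (m \in msupp p).
Qed.

Fact nneg_coeffs_semiring_closed : semiring_closed nneg_coeffs.
Proof.
split; split.
- by apply/nneg_coeffsP => m; rewrite mcoeff0.
- move=> p q /nneg_coeffsP p_ge0 /nneg_coeffsP q_ge0; apply/nneg_coeffsP => m.
  by rewrite mcoeffD addr_ge0.
- by apply/nneg_coeffsP => m; rewrite mcoeff1 ler0n.
- move=> p q /nneg_coeffsP p_ge0 /nneg_coeffsP q_ge0; apply/nneg_coeffsP => m.
  by rewrite mcoeffM sumr_ge0 // => k _; rewrite mulr_ge0.
Qed.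

HB.instance Definition _ :=
  GRing.isSemiringClosed.Build {mpoly R[n]} nneg_coeffs nneg_coeffs_semiring_closed.

Lemma nneg_coeffsX (i : 'I_n) : 'X_i \in nneg_coeffs.
Proof. by apply/nneg_coeffsP => m; rewrite mcoeffX ler0n. Qed.

End NonnegCoeffs.
Arguments nneg_coeffs {n R}.

Lemma dhomogXU (i : 'I_3) : ('X_i : poly3) \is 1.-homog.
Proof. by rewrite dhomogX /= mdeg1. Qed.

Lemma not_mulX_of_meval (n : nat) (R : comRingType) (v : 'I_n -> R) (i : 'I_n)
    (P : {mpoly R[n]}) :
  v i = 0 -> P.@[v] != 0 -> ~ exists Q, P = 'X_i * Q.
Proof. by move=> vi0 + [Q PQ]; rewrite PQ mevalM mevalXU vi0 mul0r eqxx. Qed.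

Section GradedMatrices.
Variables (k : nat) (R : ringType).

Definition graded_mx (n : nat) (A : 'M[{mpoly R[k]}]_2) :=
  forall i j : 'I_2, A i j \is (n + j - i)%N.-homog.

Lemma graded_mxM n1 n2 A B : (0 < n1)%N -> (0 < n2)%N ->
  graded_mx n1 A -> graded_mx n2 B -> graded_mx (n1 + n2) (A *m B).
Proof.
move=> n1_gt0 n2_gt0 homA homB i j.
have homAB l : A i l * B l j \is (n1 + n2 + j - i)%N.-homog.
  have -> : (n1 + n2 + j - i = (n1 + l - i) + (n2 + j - l))%N.
    by have := ltn_ord i; have := ltn_ord l; lia.
  exact: dhomogM.
by rewrite mulmx22E dhomogD.
Qed.

End GradedMatrices.

Definition sq3 : 3.-tuple poly3 := [tuple 'X_0 ^+ 2; 'X_1 ^+ 2; 'X_2 ^+ 2].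
Definition subst_sq (P : poly3) : ratfun3 := tofrac (P \mPo sq3).
HB.instance Definition _ := GRing.RMorphism.copy subst_sq (@tofrac _ \o comp_mpoly sq3).

Definition at_x (i : 'I_3) : int := (i == 0)%:R.
Definition at_y (i : 'I_3) : int := (i == 1)%:R.

Lemma tnth_sq3 (i : 'I_3) : tnth sq3 i = 'X_i ^+ 2.
Proof.
by case: i => [[|[|[|//]]] ?]; rewrite (tnth_nth 0) /=; congr ('X__ ^+ 2); apply: val_inj.
Qed.

Lemma subst_sqX (i : 'I_3) : subst_sq 'X_i = tofrac 'X_i ^+ 2.
Proof. by rewrite /subst_sq comp_mpolyXU -tnth_nth tnth_sq3 rmorphXn. Qed.

Lemma meval_subst_sq_idem (v : 'I_3 -> int) (P : poly3) :
  (forall i, v i ^+ 2 = v i) -> (P \mPo sq3).@[v] = P.@[v].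
Proof.
move=> v_idem; rewrite comp_mpoly_meval; apply: meval_eq => i.
by rewrite tnth_sq3 rmorphXn /= mevalXU v_idem.
Qed.

Lemma at_x_idem i : at_x i ^+ 2 = at_x i. Proof. by rewrite /at_x; case: (i == 0). Qed.

(* At u = v = w = 1 the trace condition is Cohn's tr A = 3 A_21. *)
Definition markov_trace : poly3 := 'X_0 + 'X_1 + 'X_2.
Definition cohn_det (e f : nat) : poly3 := 'X_0 ^+ e * 'X_1 ^+ f * 'X_2 ^+ (e + f).
Definition proj_x : 'M[int]_2 := mx22 1 0 1 0.
Definition proj_y : 'M[int]_2 := mx22 0 0 1 1.

Lemma proj_x_idem : proj_x *m proj_x = proj_x.
Proof.
by apply/matrixP => i j; rewrite mulmx22E !mxE; case: (ord2P i) => ->; case: (ord2P j) => ->.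
Qed.

Lemma proj_y_idem : proj_y *m proj_y = proj_y.
Proof.
by apply/matrixP => i j; rewrite mulmx22E !mxE; case: (ord2P i) => ->; case: (ord2P j) => ->.
Qed.

Lemma cohn_detD e f g h : cohn_det (e + g) (f + h) = cohn_det e f * cohn_det g h.
Proof. by rewrite /cohn_det addnACA !exprD; ring. Qed.

Record cohn_matrix (e f : nat) (A : 'M[poly3]_2) : Prop := CohnMatrix {
  cohn_nneg : A \is a mxOver nneg_coeffs;
  cohn_graded : graded_mx (e + f) A;
  cohn_tr : cohn_trace markov_trace A;
  cohn_at_x : map_mx (meval at_x) A = proj_x;
  cohn_at_y : map_mx (meval at_y) A = proj_y;
  cohn_detE : \det A = cohn_det e f }.

Lemma cohn_matrixM e f g h A B : (0 < e + f)%N -> (0 < g + h)%N ->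
  cohn_matrix e f A -> cohn_matrix g h B -> cohn_trace markov_trace (A *m B) ->
  cohn_matrix (e + g) (f + h) (A *m B).
Proof.
move=> ef_gt0 gh_gt0 [nA gA _ xA yA dA] [nB gB _ xB yB dB] trAB; split => //.
- exact: mxOverM.
- by rewrite addnACA; apply: graded_mxM.
- by rewrite map_mxM xA xB proj_x_idem.
- by rewrite map_mxM yA yB proj_y_idem.
- by rewrite det_mulmx dA dB cohn_detD.
Qed.

Lemma cohn_entry_at_x e f A : cohn_matrix e f A -> (A 1 0).@[at_x] = 1.
Proof. by case=> _ _ _ xA _; have /matrixP/(_ 1 0) := xA; rewrite !mxE. Qed.

Lemma cohn_entry_at_y e f A : cohn_matrix e f A -> (A 1 0).@[at_y] = 1.
Proof. by case=> _ _ _ _ yA; have /matrixP/(_ 1 0) := yA; rewrite !mxE. Qed.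

Lemma subst_sq_neq0 (P : poly3) : P.@[at_x] = 1 -> subst_sq P != 0.
Proof.
move=> Px1; rewrite tofrac_eq0; apply: contra_neq (@oner_neq0 int) => P0.
by rewrite -Px1 -(meval_subst_sq_idem _ at_x_idem) P0 meval0.
Qed.

Lemma subst_sq_cohn_det e f : subst_sq (cohn_det e f) = tofrac (cohn_det e f) ^+ 2.
Proof. by rewrite /cohn_det !rmorphM !rmorphXn /= !subst_sqX -!exprM !(mulnC 2%N) !exprM !exprMn. Qed.

Lemma tofracX_neq0 (i : 'I_3) : tofrac ('X_i : poly3) != 0.
Proof.
rewrite tofrac_eq0; apply: contra_neq (@oner_neq0 int).
by move/(congr1 (meval (fun=> 1))); rewrite meval0 mevalXU.
Qed.

Lemma xyz_neq0 : vx * vy * vz != 0.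
Proof. by rewrite !mulf_neq0 // tofracX_neq0. Qed.

Lemma tofrac_cohn_det e f : tofrac (cohn_det e f) = vx ^+ e * vy ^+ f * vz ^+ (e + f).
Proof. by rewrite /cohn_det !tofracM (tofracXn e) (tofracXn f) (tofracXn (e + f)). Qed.

Lemma tofrac_cohn_det_neq0 e f : tofrac (cohn_det e f) != 0.
Proof. by rewrite tofrac_cohn_det !mulf_neq0 ?expf_neq0 ?tofracX_neq0. Qed.

(* P(x^2,y^2,z^2) / (x^(e-1) y^(f-1) z^(e+f-1)), written without truncated
   subtraction so that it also covers 0/1 and 1/0. *)
Definition markov_frac (e f : nat) (P : poly3) : ratfun3 :=
  subst_sq P * (vx * vy * vz) / tofrac (cohn_det e f).

Lemma tofrac_cohn_detD a b c d :
  tofrac (cohn_det (a + c) (b + d)) = tofrac (cohn_det a b) * tofrac (cohn_det c d).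
Proof. by rewrite cohn_detD rmorphM. Qed.

Lemma markov_frac_exchange a b c d (Pa Pc Pm Pn : poly3) :
  Pn * Pa = cohn_det a b * Pc ^+ 2 + Pm ^+ 2 -> subst_sq Pa != 0 ->
  markov_frac (a + 2 * c) (b + 2 * d) Pn
  = (markov_frac c d Pc ^+ 2 + markov_frac (a + c) (b + d) Pm ^+ 2)
    / markov_frac a b Pa.
Proof.
move=> /(congr1 subst_sq) exch Pa0.
rewrite (rmorphM subst_sq Pn) rmorphD (rmorphM subst_sq (cohn_det a b)) /= in exch.
rewrite subst_sq_cohn_det (rmorphXn subst_sq) (rmorphXn subst_sq) /= in exch.
rewrite /markov_frac !mul2n -!addnn !tofrac_cohn_detD -expr2.
exact: frac_exchange Pa0 (tofrac_cohn_det_neq0 a b) (tofrac_cohn_det_neq0 c d) xyz_neq0 exch.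
Qed.

Lemma markov_fracE a b P : (0 < a)%N -> (0 < b)%N ->
  markov_frac a b P
  = subst_sq P / (vx ^+ (a - 1) * vy ^+ (b - 1) * vz ^+ (a + b - 1)).
Proof.
case: a => // a _; case: b => // b _.
by rewrite /markov_frac tofrac_cohn_det mul_xyz_divS ?tofracX_neq0 // addSn addnS !subn1.
Qed.

Lemma markov_frac_base :
  [/\ markov_frac 0 1 1 = vx, markov_frac 1 0 1 = vy
    & markov_frac 1 1 ('X_0 + 'X_1) = (vx ^+ 2 + vy ^+ 2) / vz].
Proof.
rewrite /markov_frac !tofrac_cohn_det rmorph1 rmorphD /= !subst_sqX.
exact: markov_base_identities (tofracX_neq0 0) (tofracX_neq0 1) (tofracX_neq0 2).
Qed.

Lemma cohn_matrix_base_l : cohn_matrix 0 1 (mx22 ('X_0 + 'X_2) ('X_0 * 'X_1) 1 'X_1).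
Proof.
split.
- apply/mxOverP => i j; rewrite mxE.
  case: (ord2P i) => ->; case: (ord2P j) => -> /=; rewrite ?rpred1 ?nneg_coeffsX //.
  + by rewrite rpredD ?nneg_coeffsX.
  + by rewrite rpredM ?nneg_coeffsX.
- move=> i j; rewrite mxE; case: (ord2P i) => ->; case: (ord2P j) => -> /=.
  + exact: dhomogD (dhomogXU 0) (dhomogXU 2).
  + exact: dhomogM (dhomogXU 0) (dhomogXU 1).
  + exact: dhomog1.
  + exact: dhomogXU.
- by rewrite /cohn_trace /markov_trace mxtrace22 !mxE /=; ring.
- by rewrite map_mx22 !(mevalD, mevalM, mevalXU, meval1).
- by rewrite map_mx22 !(mevalD, mevalM, mevalXU, meval1).
- by rewrite det_mx22 !mxE /cohn_det /=; ring.
Qed.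

Lemma cohn_matrix_base_r : cohn_matrix 1 0 (mx22 'X_0 ('X_0 * 'X_1) 1 ('X_1 + 'X_2)).
Proof.
split.
- apply/mxOverP => i j; rewrite mxE.
  case: (ord2P i) => ->; case: (ord2P j) => -> /=; rewrite ?rpred1 ?nneg_coeffsX //.
  + by rewrite rpredM ?nneg_coeffsX.
  + by rewrite rpredD ?nneg_coeffsX.
- move=> i j; rewrite mxE; case: (ord2P i) => ->; case: (ord2P j) => -> /=.
  + exact: dhomogXU.
  + exact: dhomogM (dhomogXU 0) (dhomogXU 1).
  + exact: dhomog1.
  + exact: dhomogD (dhomogXU 1) (dhomogXU 2).
- by rewrite /cohn_trace /markov_trace mxtrace22 !mxE /=; ring.
- by rewrite map_mx22 !(mevalD, mevalM, mevalXU, meval1).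
- by rewrite map_mx22 !(mevalD, mevalM, mevalXU, meval1).
- by rewrite det_mx22 !mxE /cohn_det /=; ring.
Qed.

Definition cohn_pair (M : nat -> nat -> ratfun3) (e f g h : nat) :=
  exists A B : 'M[poly3]_2,
  [/\ cohn_matrix e f A, cohn_matrix g h B, cohn_trace markov_trace (A *m B),
      cohn_markov markov_trace A B &
      [/\ M e f = markov_frac e f (A 1 0), M g h = markov_frac g h (B 1 0)
        & M (e + g)%N (f + h)%N = markov_frac (e + g) (f + h) ((A *m B) 1 0)]].

Section MarkovFamily.
Variable M : nat -> nat -> ratfun3.
Hypothesis M_markov : is_markov_family M.

Lemma cohn_pair_base : cohn_pair M 0 1 1 0.
Proof.
have [M10 M01 M11 _] := M_markov.
have [F01 F10 F11] := markov_frac_base.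
exists (mx22 ('X_0 + 'X_2) ('X_0 * 'X_1) 1 'X_1), (mx22 'X_0 ('X_0 * 'X_1) 1 ('X_1 + 'X_2)).
split; [exact: cohn_matrix_base_l | exact: cohn_matrix_base_r | | | ].
- by rewrite /cohn_trace /markov_trace mxtrace22 !mulmx22E !mxE /=; ring.
- by rewrite /cohn_markov /markov_trace !mulmx22E !det_mx22 !mxE /=; ring.
- split; rewrite ?mulmx22E !mxE /= ?mul1r ?mulr1.
  + by rewrite M01 F01.
  + by rewrite M10 F10.
  + by rewrite M11 F11.
Qed.

Lemma cohn_pair_left e f g h : (g * f = e * h + 1)%N -> (e + g <= f + h)%N ->
  (e + (e + g) <= f + (f + h))%N ->
  cohn_pair M e f g h -> cohn_pair M e f (e + g) (f + h).
Proof.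
move=> farey le_med le_med_l [A [B [cA cB trAB mkAB [MA MB MAB]]]].
have /andP[iA iB] := farey_markov_index farey le_med.
have [ef_gt0 gh_gt0] := farey_gt0 farey.
exists A, (A *m B); split.
- exact: cA.
- exact: cohn_matrixM.
- exact: cohn_trace_mul_l (cohn_tr cB) trAB.
- exact: cohn_markov_mul_l (cohn_tr cA) mkAB.
split; [exact: MA | exact: MAB |].
have [_ _ _ M_rec] := M_markov.
have -> : (e + (e + g) = g + 2 * e)%N by lia.
have -> : (f + (f + h) = h + 2 * f)%N by lia.
have adj : farey_adj g h e f by rewrite /farey_adj farey mulnC eqxx.
rewrite (M_rec g h e f iB iA adj); last by lia.
rewrite MA MB (addnC g e) (addnC h f) MAB (addnC e g) (addnC f h).
symmetry; apply: markov_frac_exchange (subst_sq_neq0 (cohn_entry_at_x cB)).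
by rewrite -(cohn_detE cB) (cohn_exchange_l (cohn_tr cA) mkAB).
Qed.

Lemma cohn_pair_right e f g h : (g * f = e * h + 1)%N -> (e + g <= f + h)%N ->
  (e + g + g <= f + h + h)%N ->
  cohn_pair M e f g h -> cohn_pair M (e + g) (f + h) g h.
Proof.
move=> farey le_med le_med_r [A [B [cA cB trAB mkAB [MA MB MAB]]]].
have /andP[iA iB] := farey_markov_index farey le_med.
have [ef_gt0 gh_gt0] := farey_gt0 farey.
exists (A *m B), B; split.
- exact: cohn_matrixM.
- exact: cB.
- exact: cohn_trace_mul_r (cohn_tr cA) trAB.
- exact: cohn_markov_mul_r (cohn_tr cB) mkAB.
split; [exact: MAB | exact: MB |].
have [_ _ _ M_rec] := M_markov.
have -> : (e + g + g = e + 2 * g)%N by lia.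
have -> : (f + h + h = f + 2 * h)%N by lia.
have adj : farey_adj e f g h by rewrite /farey_adj (mulnC f) farey eqxx orbT.
rewrite (M_rec e f g h iA iB adj); last by lia.
rewrite MA MB MAB; symmetry.
apply: markov_frac_exchange (subst_sq_neq0 (cohn_entry_at_x cA)).
by rewrite -(cohn_detE cA) (cohn_exchange_r (cohn_tr cB) mkAB).
Qed.

Lemma cohn_pair_farey e f g h : (g * f = e * h + 1)%N -> (e + g <= f + h)%N ->
  cohn_pair M e f g h.
Proof.
have [n] := ubnP (e + f + g + h); elim: n => // n IH in e f g h *.
move=> lt_n farey le_med; have [ef_gt0 gh_gt0] := farey_gt0 farey.
have [[-> -> -> ->] | [le_eg le_fh] | [le_ge le_hf]] := farey_descent farey.
- exact: cohn_pair_base.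
- rewrite -(subnKC le_eg) -(subnKC le_fh) in farey le_med lt_n *.
  move: (g - e)%N (h - f)%N farey le_med lt_n => p q farey le_med lt_n.
  have farey' : (p * f = e * q + 1)%N by move: farey; rewrite mulnDl mulnDr (mulnC e f); lia.
  have le_med' : (e + p <= f + q)%N.
    have /andP[_] := farey_markov_index farey le_med.
    rewrite /markov_index => /andP[_ /orP[// | /andP[_ /eqP fq0]]].
    have f0 : f = 0%N by lia.
    by move: farey'; rewrite f0 muln0; lia.
  apply: cohn_pair_left => //; apply: IH => //; lia.
- rewrite -(subnKC le_ge) -(subnKC le_hf) in farey le_med lt_n *.
  move: (e - g)%N (f - h)%N farey le_med lt_n => p q farey le_med lt_n.
  rewrite (addnC g p) (addnC h q) in farey le_med lt_n *.
  have farey' : (g * q = p * h + 1)%N by move: farey; rewrite mulnDl mulnDr (mulnC g h); lia.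
  have le_med' : (p + g <= q + h)%N.
    have /andP[+ _] := farey_markov_index farey le_med.
    rewrite /markov_index => /andP[_ /orP[// | /andP[_ /eqP qh0]]].
    have h0 : h = 0%N by lia.
    by move: farey'; rewrite h0 muln0; lia.
  apply: cohn_pair_right => //; apply: IH => //; lia.
Qed.

End MarkovFamily.

Theorem theorem3p1 (M : nat -> nat -> ratfun3) (a b : nat) :
  is_markov_family M ->
  (1 <= a)%N -> (1 <= b)%N -> coprime a b -> (a <= b)%N ->
  exists P : poly3,
    [/\ P \is (a + b - 1)%N.-homog,
        (forall m, 0 <= P@_m),
        ~ (exists Q : poly3, P = 'X_0 * Q),
        ~ (exists Q : poly3, P = 'X_1 * Q) /\
        ~ (exists Q : poly3, P = 'X_2 * Q) &
        M a b =
          tofrac (P \mPo [tuple ('X_0 : poly3) ^+ 2; 'X_1 ^+ 2; 'X_2 ^+ 2])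
          / (vx ^+ (a - 1) * vy ^+ (b - 1) * vz ^+ (a + b - 1))].
Proof.
move=> M_markov a_gt0 b_gt0 cab le_ab.
have [e [f [g [h [Ea Eb farey]]]]] := coprime_mediant a_gt0 b_gt0 cab.
subst a b; have [ef_gt0 gh_gt0] := farey_gt0 farey.
have [A [B [cA cB trAB _ [_ _ MAB]]]] := cohn_pair_farey M_markov farey le_ab.
have cAB := cohn_matrixM ef_gt0 gh_gt0 cA cB trAB.
have [at_x1 at_y1] := (cohn_entry_at_x cAB, cohn_entry_at_y cAB).
exists ((A *m B) 1 0); split.
- by have := cohn_graded cAB 1 0; rewrite addn0.
- by apply/nneg_coeffsP; have /mxOverP := cohn_nneg cAB.
- by apply: (not_mulX_of_meval (v := at_y)); rewrite // at_y1 oner_neq0.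
- by split; apply: (not_mulX_of_meval (v := at_x)); rewrite // at_x1 oner_neq0.
- by rewrite MAB markov_fracE.
Qed.
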